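(* Let $G$ be a star graph on $n+1$ vertices (one center vertex adjacent to $n$ leaves and no other edges), and let $\Delta$ be the Stanley–Reisner complex of $\mathcal{F}(G)$ (the independence complex of $G$). Then $$\mu_2(\Delta,t)=t^2\sum_{i=1}^{n-2}\binom{n}{i+2}t^i=t^2\sum_{i=1}^{n-2}f_{i+1}t^i,$$ where $f_k$ is the number of $k$-dimensional faces of $\Delta$.
   Context: For a graph $G$ on $[N]$, $\mathcal{F}(G)=(x_ix_j:\{i,j\}\in E(G))\subset\mathbb{K}[x_1,\dots,x_N]$; its Stanley–Reisner complex is the simplicial complex whose faces are the sets $\tau$ with $x_\tau=\prod_{j\in\tau}x_j\notin\mathcal{F}(G)$ (the independent sets). For an ideal $I$, the $m$-th symbolic defect is $\mathrm{sdefect}(I,m)=\mu(I^{(m)}/I^m)$, where $\mu$ is the minimal number of generators and, for squarefree monomial $I$, $I^{(m)}=\bigcap_{P\in\mathrm{Ass}(I)}P^m$. For a $d$-dimensional simplicial complex $\Delta$, let $\Delta^{[i]}$ be the simplicial complex whose facets are the $i$-dimensional faces of $\Delta$, and $\mathcal{F}(\Delta^{[i]})$ its facet ideal (generated by $x_\sigma$ for $\sigma$ an $i$-face). The $m$-th symbolic defect polynomial is $\mu_m(\Delta,t)=t^2\sum_{i=1}^{d-1}\mathrm{sdefect}(\mathcal{F}(\Delta^{[i]}),m)\,t^i$. *)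

(* Squarefree monomial ideals in K[x_0..x_{N-1}] are encoded
   combinatorially: a monomial is its exponent vector 'I_N -> nat, a squarefree
   monomial x_sigma is the indicator of sigma : {set 'I_N}, and a squarefree
   monomial ideal is given by its (finite) set of squarefree generators. *)
From HB Require Import structures.
From mathcomp Require Import all_boot all_order all_algebra.
Set Implicit Arguments. Unset Strict Implicit. Unset Printing Implicit Defensive.
Import Order.TTheory GRing.Theory Num.Theory.

Section Monomial.
Variable N : nat.

Definition sqf (s : {set 'I_N}) : 'I_N -> nat := fun j => (j \in s : nat).

Definition inI (E : {set {set 'I_N}}) (a : 'I_N -> nat) : bool :=
  [exists s in E, [forall j, sqf s j <= a j]].

(* membership of x^a in the ordinary power I^m: x^a is divisible by a product
   of m generators *)
Definition inIpow (E : {set {set 'I_N}}) (m : nat) (a : 'I_N -> nat) : bool :=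
  [exists t : m.-tuple {set 'I_N},
     all (fun s => s \in E) t &&
     [forall j, \sum_(s <- t) sqf s j <= a j]].

(* vertex covers / minimal vertex covers of the generator hypergraph;
   the associated primes of the squarefree monomial ideal are the
   P_C = (x_j : j in C) for C a minimal vertex cover *)
Definition is_cover (E : {set {set 'I_N}}) (C : {set 'I_N}) : bool :=
  [forall s in E, s :&: C != set0].
Definition is_mincover (E : {set {set 'I_N}}) (C : {set 'I_N}) : bool :=
  is_cover E C && [forall D : {set 'I_N}, (D \proper C) ==> ~~ is_cover E D].

(* membership of x^a in I^(m) = \bigcap_{P in Ass I} P^m *)
Definition inIsym (E : {set {set 'I_N}}) (m : nat) (a : 'I_N -> nat) : bool :=
  [forall C : {set 'I_N}, is_mincover E C ==> (m <= \sum_(j in C) a j)].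

Definition decr (a : 'I_N -> nat) (j : 'I_N) : 'I_N -> nat :=
  fun k => a k - (k == j).

Definition mingen_sym (E : {set {set 'I_N}}) (m : nat) (a : 'I_N -> nat) : bool :=
  inIsym E m a && [forall j, (0 < a j) ==> ~~ inIsym E m (decr a j)].

(* sdefect(I, m) = mu(I^(m)/I^m) = number of minimal monomial generators of
   I^(m) not lying in I^m.  Every such generator has all exponents <= m, so we
   may range over exponent vectors with entries in 'I_m.+1. *)
Definition sdefect (E : {set {set 'I_N}}) (m : nat) : nat :=
  #|[set a : {ffun 'I_N -> 'I_m.+1} |
      mingen_sym E m (fun j => val (a j)) && ~~ inIpow E m (fun j => val (a j))]|.

Definition edge_gens (e : rel 'I_N) : {set {set 'I_N}} :=
  [set s : {set 'I_N} | [exists i, [exists j, [&& i != j, e i j & s == [set i; j]]]]].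

Definition SRcomplex (E : {set {set 'I_N}}) : pred {set 'I_N} :=
  fun t => ~~ inI E (sqf t).

Definition cdim (D : pred {set 'I_N}) : nat := (\max_(s | D s) #|s|).-1.

Definition iface_gens (D : pred {set 'I_N}) (i : nat) : {set {set 'I_N}} :=
  [set s | D s & #|s| == i.+1].

Definition fnum (D : pred {set 'I_N}) (k : nat) : nat := #|iface_gens D k|.

Definition mu_poly (m : nat) (D : pred {set 'I_N}) : {poly int} :=
  'X^2 * \sum_(1 <= i < cdim D) (sdefect (iface_gens D i) m)%:R *: 'X^i.

End Monomial.

Definition star (n : nat) (c : 'I_n.+1) : rel 'I_n.+1 :=
  fun u v => (u == c) != (v == c).

From mathcomp Require Import all_boot all_order all_algebra zify.
Set Implicit Arguments.
Unset Strict Implicit.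
Unset Printing Implicit Defensive.

(* The independent sets of the star are the sets of leaves and the subsets of
   {c}, so for i >= 1 the ideal F(Delta^[i]) is the squarefree Veronese ideal I
   generated by the (i+1)-subsets of the n leaves.  With k = i+1, a set C of
   variables is a vertex cover of I iff it misses fewer than k leaves, so x^a
   lies in I^(2) iff every such C carries total degree at least 2.  For k >= 2
   the minimal generators of I^(2) outside I^2 are exactly the x_s with s a
   (k+1)-set of leaves: a squarefree x_s lies in I^(2) iff |s| > k, and in I^2
   only if |s| >= 2k; a minimal generator with an exponent 2 at j already lies
   in I^2, since a cover witnessing x^a/x_j notin I^(2) meets the support of a
   only in j, so x^a is divisible by the square of x_t for the k-set t formed
   by j and the leaves outside that cover.  Hence sdefect(F(Delta^[i]), 2) =
   C(n, i+2) = f_(i+1). *)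

Lemma exists_subset_card (T : finType) (B : {set T}) k :
  k <= #|B| -> exists2 A : {set T}, A \subset B & #|A| = k.
Proof.
rewrite -bin_gt0 -cards_draws => /card_gt0P[A].
by rewrite inE => /andP[AB /eqP Ak]; exists A.
Qed.

Lemma leq_sum_subset (T : finType) (D C : {set T}) (a : T -> nat) :
  D \subset C -> \sum_(j in D) a j <= \sum_(j in C) a j.
Proof.
by move=> DC; rewrite [leqRHS](big_setID D) /= (setIidPr DC) leq_addr.
Qed.

Section SquarefreeMonomials.
Variable N : nat.
Implicit Types (E : {set {set 'I_N}}) (a b : 'I_N -> nat).
Implicit Types (s t C : {set 'I_N}).

Lemma sum_sqf C s : \sum_(j in C) sqf s j = #|C :&: s|.
Proof.
rewrite -sum1_card big_mkcond [RHS]big_mkcond; apply: eq_bigr => j _.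
by rewrite inE /sqf; case: (j \in C); case: (j \in s).
Qed.

Lemma sum_sqfT s : \sum_j sqf s j = #|s|.
Proof.
by rewrite -(setTI s) -sum_sqf setTI; apply: eq_bigl => j; rewrite inE.
Qed.

Lemma inI_sqf E t : inI E (sqf t) = [exists s in E, s \subset t].
Proof.
apply: eq_existsb => s; congr (_ && _).
apply/forallP/subsetP => [st j js | st j].
  by have := st j; rewrite /sqf js lt0b.
by rewrite /sqf; case: (boolP (j \in s)) => // /st ->.
Qed.

Lemma decr_neq a j x : x != j -> decr a j x = a x.
Proof. by rewrite /decr => /negbTE ->; rewrite subn0. Qed.

Lemma decr_sqf s j : j \in s -> decr (sqf s) j =1 sqf (s :\ j).
Proof.
move=> js x; rewrite /sqf !inE.
case: (eqVneq x j) => [->|xj]; last exact: decr_neq.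
by rewrite /decr /sqf js eqxx.
Qed.

Lemma eq_inIsym E m a b : a =1 b -> inIsym E m a = inIsym E m b.
Proof. by move=> ab; apply: eq_forallb => C; under eq_bigr do rewrite ab. Qed.

Lemma eq_inIpow E m a b : a =1 b -> inIpow E m a = inIpow E m b.
Proof.
by move=> ab; apply: eq_existsb => t; under eq_forallb do rewrite ab.
Qed.

Lemma eq_mingen_sym E m a b : a =1 b -> mingen_sym E m a = mingen_sym E m b.
Proof.
move=> ab; rewrite /mingen_sym (eq_inIsym _ _ ab); congr (_ && _).
apply: eq_forallb => j; rewrite ab (@eq_inIsym _ _ (decr a j) (decr b j)) //.
by move=> x; rewrite /decr ab.
Qed.

Lemma inIsymP E m a :
  reflect (forall C, is_cover E C -> m <= \sum_(j in C) a j) (inIsym E m a).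
Proof.
apply: (iffP forallP) => [hmin C | hcov C]; last first.
  by apply/implyP => /andP[/hcov].
move=> /minset_exists[D /minsetP[covD minD] DC].
apply: leq_trans (leq_sum_subset a DC); apply: (implyP (hmin D)).
rewrite /is_mincover covD; apply/forallP => D'; apply/implyP => D'D.
by apply/negP => /minD /(_ (proper_sub D'D)) D'E; rewrite D'E properxx in D'D.
Qed.

Lemma inIpow2_square E t a :
  t \in E -> {in t, forall x, 2 <= a x} -> inIpow E 2 a.
Proof.
move=> tE ta; apply/existsP; exists [tuple t; t]; rewrite /= tE /=.
apply/forallP => x; rewrite !big_cons big_nil addn0 /sqf.
by case: (boolP (x \in t)) => [/ta|].
Qed.

Lemma SRcomplex_edge_gens (e : rel 'I_N) t :
  SRcomplex (edge_gens e) t =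
  [forall i in t, forall j in t, (i != j) ==> ~~ e i j].
Proof.
rewrite /SRcomplex inI_sqf; apply/idP/idP => [indep | /forall_inP indep].
  apply/forall_inP => i it; apply/forall_inP => j jt; apply/implyP => ij.
  apply: contra indep => eij; apply/exists_inP; exists [set i; j].
    rewrite /edge_gens inE; apply/existsP; exists i; apply/existsP; exists j.
    by rewrite ij eij /=.
  by rewrite subUset !sub1set it jt.
apply/exists_inP => -[s]; rewrite /edge_gens inE.
move=> /existsP[i /existsP[j /and3P[ij eij /eqP ->]]].
rewrite subUset !sub1set => /andP[it jt].
by have /forall_inP/(_ j jt)/implyP/(_ ij) := indep i it; rewrite eij.
Qed.

End SquarefreeMonomials.

Section SquarefreeVeronese.
Variables (N : nat) (L : {set 'I_N}).
Implicit Types (k m : nat) (a : 'I_N -> nat) (s t C : {set 'I_N}).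

Definition veronese k : {set {set 'I_N}} :=
  [set s : {set 'I_N} | s \subset L & #|s| == k].

Lemma is_cover_veronese k C : is_cover (veronese k) C = (#|L :\: C| < k).
Proof.
apply/forall_inP/idP => [covC | ltk s].
  rewrite ltnNge; apply/negP => /exists_subset_card[s sLC sk].
  move: sLC; rewrite subsetD => /andP[sL /disjoint_setI0 sC].
  by have := covC s; rewrite inE sL sk eqxx sC eqxx => /(_ isT).
rewrite inE setI_eq0 => /andP[sL /eqP sk]; apply: contraTN ltk => sC.
by rewrite -leqNgt -sk subset_leq_card // subsetD sL.
Qed.

Lemma inIsym_veroneseP k m a :
  reflect (forall C, #|L :\: C| < k -> m <= \sum_(j in C) a j)
          (inIsym (veronese k) m a).
Proof.
apply: (iffP (inIsymP _ _ _)) => sum_ge C.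
  by rewrite -is_cover_veronese => /sum_ge.
by rewrite is_cover_veronese => /sum_ge.
Qed.

Lemma inIsym_veronesePn k m a :
  ~~ inIsym (veronese k) m a ->
  exists2 C, #|L :\: C| < k & \sum_(j in C) a j < m.
Proof.
move=> notsym.
have /exists_inP[C ltk sumC] :
    [exists (C | #|L :\: C| < k), \sum_(j in C) a j < m].
  apply: contraR notsym => /exists_inPn sum_ge; apply/inIsym_veroneseP => C ltk.
  by rewrite leqNgt sum_ge.
by exists C.
Qed.

Lemma sqf_inIsym_veronese k s :
  s \subset L -> k < #|s| -> inIsym (veronese k) 2 (sqf s).
Proof.
move=> sL lts; apply/inIsym_veroneseP => C ltk; rewrite sum_sqf.
have : #|s :\: C| < k.
  by apply: leq_ltn_trans ltk; rewrite subset_leq_card // setSD.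
by move: lts; rewrite -(cardsID C s) setIC; lia.
Qed.

Lemma sqf_notin_Isym_veronese k s :
  0 < k -> #|s| <= k -> ~~ inIsym (veronese k) 2 (sqf s).
Proof.
(* For D a subset of s with #|s|.-1 elements, the cover ~: D misses fewer
   than k elements of L and meets s at most once. *)
move=> k0 sk; have [D Ds Dsize] := exists_subset_card (leq_pred #|s|).
have LD : #|L :\: ~: D| < k.
  rewrite setDE setCK setIC.
  apply: leq_ltn_trans (subset_leq_card (subsetIl D L)) _.
  by rewrite Dsize; lia.
apply/negP => /inIsym_veroneseP/(_ _ LD).
by rewrite sum_sqf setIC -setDE cardsDS // Dsize; lia.
Qed.

Lemma sqf_notin_Ipow_veronese k s :
  #|s| < k.*2 -> ~~ inIpow (veronese k) 2 (sqf s).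
Proof.
move=> ltsk; apply/existsP => -[[[|x [|y []]] //= _]].
rewrite !inE andbT.
move=> /andP[/andP[/andP[_ /eqP xk] /andP[_ /eqP yk]] /forallP xys].
have : \sum_j (sqf x j + sqf y j) <= \sum_j sqf s j.
  by apply: leq_sum => j _; have := xys j; rewrite !big_cons big_nil addn0.
by rewrite big_split /= !sum_sqfT xk yk addnn leqNgt ltsk.
Qed.

Lemma mingen_sym_veronese_support k m a :
  mingen_sym (veronese k) m a -> [set j | 0 < a j] \subset L.
Proof.
move=> /andP[/inIsym_veroneseP sym_a /forallP min_a]; apply/subsetP => j.
rewrite inE => aj; apply/negPn/negP => jL.
have /negP := implyP (min_a j) aj; apply; apply/inIsym_veroneseP => C ltk.
have LCj : L :\: (C :\ j) = L :\: C.
  apply/setP => x; rewrite !inE.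
  by case: (eqVneq x j) => [->|]; rewrite ?(negbTE jL) ?andbF.
rewrite -LCj in ltk; apply: leq_trans (sym_a _ ltk) _.
apply: leq_trans (leq_sum_subset _ (subsetDl C [set j])).
by apply: leq_sum => x; rewrite !inE => /andP[xj _]; rewrite decr_neq.
Qed.

Lemma inIpow_veronese_exponent2 k a j :
  inIsym (veronese k) 2 a -> a j = 2 -> j \in L ->
  ~~ inIsym (veronese k) 2 (decr a j) -> inIpow (veronese k) 2 a.
Proof.
move=> /inIsym_veroneseP sym_a aj jL /inIsym_veronesePn[C ltk sumC].
have jC : j \in C.
  apply: contraTT sumC => jC; rewrite -leqNgt (eq_bigr a) ?sym_a // => x xC.
  by rewrite decr_neq //; apply: contraNneq jC => <-.
set Z := C :\ j; set U := L :\: C in ltk *.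
have sumZ : \sum_(x in Z) a x = 0.
  apply/eqP; rewrite -leqn0 -ltnS.
  move: sumC; rewrite (big_setD1 j jC) /= {1}/decr aj eqxx (eq_bigr a) //.
  by move=> x; rewrite !inE => /andP[xj _]; rewrite decr_neq.
have jU : j \notin U by rewrite inE jC.
have LZ : L :\: Z \subset j |: U.
  by apply/subsetP => x; rewrite !inE; case: (x == j).
have kjU : k <= #|j |: U|.
  rewrite leqNgt; apply/negP => ltjU.
  by have := sym_a Z (leq_ltn_trans (subset_leq_card LZ) ltjU); rewrite sumZ.
have U2 : {in U, forall x, 2 <= a x}.
  move=> x xU; have xZ : x \notin Z.
    by move: xU; rewrite !inE => /andP[/negbTE ->]; rewrite andbF.
  have := sym_a (x |: Z); rewrite big_setU1 //= sumZ addn0; apply.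
  apply: (@leq_ltn_trans #|(j |: U) :\ x|).
    by rewrite subset_leq_card // [x |: Z]setUC -setDDl setSD.
  apply: leq_ltn_trans ltk; rewrite -(leq_add2l (x \in j |: U)) -cardsD1.
  by rewrite cardsU1 jU in_setU1 xU orbT.
apply: (@inIpow2_square _ _ (j |: U)).
  rewrite inE subUset sub1set jL subsetDl eqn_leq kjU.
  by rewrite cardsU1 jU /= add1n ltk.
by move=> x /setU1P[->|/U2]; rewrite ?aj.
Qed.

Lemma mingen_sym_veronese_sqf k a :
  (forall j, a j <= 2) -> mingen_sym (veronese k) 2 a ->
  ~~ inIpow (veronese k) 2 a -> a =1 sqf [set j | 0 < a j].
Proof.
move=> a_le2 mingen_a notpow j; rewrite /sqf inE.
have : a j != 2.
  apply: contraNneq notpow => aj.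
  have jL : j \in L.
    apply: (subsetP (mingen_sym_veronese_support mingen_a)).
    by rewrite inE aj.
  case/andP: mingen_a => sym_a /forallP/(_ j); rewrite aj => /= notsym.
  exact: inIpow_veronese_exponent2 sym_a aj jL notsym.
by have := a_le2 j; case: (a j) => [|[|[|]]].
Qed.

Lemma mingen_sym_sqf_veronese k s : 0 < k -> s \subset L ->
  mingen_sym (veronese k) 2 (sqf s) = (#|s| == k.+1).
Proof.
move=> k0 sL; apply/andP/eqP => [[sym_s /forallP min_s] | sk].
  have lt_ks : k < #|s|.
    by rewrite ltnNge; apply: contraTN sym_s; exact: sqf_notin_Isym_veronese.
  apply/eqP; rewrite eqn_leq lt_ks andbT leqNgt; apply/negP => lt_sk.
  have /card_gt0P[x xs] : 0 < #|s| by apply: leq_trans lt_ks.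
  have /implyP := min_s x.
  rewrite {1}/sqf xs (eq_inIsym _ _ (decr_sqf xs)) => /(_ isT).
  rewrite sqf_inIsym_veronese ?(subset_trans (subsetDl s _) sL) //.
  by move: lt_sk; rewrite (cardsD1 x s) xs add1n ltnS.
split; first by apply: sqf_inIsym_veronese; rewrite // sk.
apply/forallP => j; apply/implyP; rewrite /sqf lt0b => js.
rewrite (eq_inIsym _ _ (decr_sqf js)) sqf_notin_Isym_veronese //.
by move: sk; rewrite (cardsD1 j s) js add1n => -[->].
Qed.

Definition sqf_ffun s : {ffun 'I_N -> 'I_3} := [ffun j => inord (sqf s j)].

Lemma sqf_ffunE s j : val (sqf_ffun s j) = sqf s j.
Proof. by rewrite ffunE /= inordK // /sqf; case: (j \in s). Qed.

Lemma sqf_ffun_inj : injective sqf_ffun.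
Proof.
move=> s t st; apply/setP => j; have := sqf_ffunE s j.
by rewrite st sqf_ffunE /sqf; case: (j \in s); case: (j \in t).
Qed.

Lemma sdefect_veronese k : 1 < k -> sdefect (veronese k) 2 = 'C(#|L|, k.+1).
Proof.
move=> k1; rewrite -cards_draws -/(veronese k.+1).
rewrite -(card_imset _ sqf_ffun_inj); apply: eq_card => a; rewrite inE.
apply/andP/imsetP => [[mingen_a notpow] | ].
  have a_sqf :=
    mingen_sym_veronese_sqf (fun j => ltn_ord (a j)) mingen_a notpow.
  exists [set j | 0 < a j].
    have supp_a := mingen_sym_veronese_support mingen_a.
    rewrite inE supp_a -mingen_sym_sqf_veronese ?(ltnW k1) //.
    by rewrite -(eq_mingen_sym _ _ a_sqf).
  by apply/ffunP => j; apply: val_inj; rewrite sqf_ffunE -a_sqf.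
case=> s; rewrite inE => /andP[sL /eqP sk] ->.
rewrite (eq_mingen_sym _ _ (sqf_ffunE s)) (eq_inIpow _ _ (sqf_ffunE s)).
rewrite mingen_sym_sqf_veronese ?sk ?eqxx //; last exact: ltnW.
by rewrite sqf_notin_Ipow_veronese // sk -addnn; lia.
Qed.

End SquarefreeVeronese.

Section StarGraph.
Variables (n : nat) (c : 'I_n.+1).
Local Notation Delta := (SRcomplex (edge_gens (star c))).

Lemma card_star_leaves : #|[set~ c]| = n.
Proof. by rewrite cardsC1 card_ord. Qed.

Lemma star_faceE t : Delta t = (t \subset [set~ c]) || (t \subset [set c]).
Proof.
rewrite SRcomplex_edge_gens /star; apply/idP/idP => [indep | ].
  have [ct | nct] := boolP (c \in t); [apply/orP; right | apply/orP; left].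
    apply/subsetP => x xt; rewrite inE; apply: contraTT (indep) => xc.
    apply/forall_inP => /(_ c ct)/forall_inP/(_ x xt).
    by rewrite eq_sym xc eqxx (negbTE xc).
  by apply/subsetP => x xt; rewrite !inE; apply: contraNneq nct => <-.
case/orP => /subsetP tc; apply/forall_inP => i it; apply/forall_inP => j jt.
  have := tc i it; have := tc j jt; rewrite !inE => /negbTE-> /negbTE->.
  by rewrite implybT.
have := tc i it; have := tc j jt; rewrite !inE => /eqP-> /eqP->.
by rewrite eqxx.
Qed.

Lemma cdim_star : cdim Delta = n.-1.
Proof.
rewrite /cdim; suff -> : \max_(s | Delta s) #|s| = maxn n 1 by case: n.
apply/eqP; rewrite eqn_leq; apply/andP; split.
  apply/bigmax_leqP => s; rewrite star_faceE => /orP[] /subset_leq_card.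
    by rewrite card_star_leaves => sn; rewrite leq_max sn.
  by rewrite cards1 => s1; rewrite leq_max s1 orbT.
rewrite geq_max -{1}card_star_leaves -(cards1 c).
by rewrite !(@leq_bigmax_cond _ Delta (fun s => #|s|)) // star_faceE subxx ?orbT.
Qed.

Lemma iface_gens_star i : 0 < i -> iface_gens Delta i = veronese [set~ c] i.+1.
Proof.
move=> i0; apply/setP => s; rewrite !inE star_faceE andb_orl.
case: (eqVneq #|s| i.+1) => [si|]; rewrite ?andbF ?andbT //.
by rewrite orb_idr // => /subset_leq_card; rewrite cards1 si ltnS leqNgt i0.
Qed.

End StarGraph.

Local Open Scope ring_scope.

Theorem corollary6p5 (n : nat) (c : 'I_n.+1) :
  mu_poly 2 (SRcomplex (edge_gens (star c))) =
    'X^2 * \sum_(1 <= i < n.-1) ('C(n, i.+2))%:R *: 'X^i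
  /\
  mu_poly 2 (SRcomplex (edge_gens (star c))) =
    'X^2 * \sum_(1 <= i < n.-1) (fnum (SRcomplex (edge_gens (star c))) i.+1)%:R *: 'X^i.
Proof.
have sdefect_i i : (1 <= i)%N ->
    sdefect (iface_gens (SRcomplex (edge_gens (star c))) i) 2 = 'C(n, i.+2).
  by move=> i0; rewrite iface_gens_star // sdefect_veronese // card_star_leaves.
have fnum_i i : (1 <= i)%N ->
    fnum (SRcomplex (edge_gens (star c))) i.+1 = 'C(n, i.+2).
  by move=> i0; rewrite /fnum iface_gens_star // cards_draws card_star_leaves.
rewrite /mu_poly cdim_star.
split; congr (_ * _); apply: eq_big_nat => i /andP[i0 _].
  by rewrite sdefect_i.
by rewrite sdefect_i // fnum_i.
Qed.
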